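(* A function $a\in C^2([-\pi,\pi])$ satisfies $\int_{-\pi}^\pi a(x)dx=0$ and solves $$\Big(\int_{-\pi}^x a(\bar x)\,d\bar x\Big)a'(x)-a(x)^2+\frac1\pi\int_{-\pi}^\pi a^2(\bar x)\,d\bar x=0\quad\text{for all }x\in[-\pi,\pi]$$ if and only if either $a=\mu\cos(kx)$ for some $\mu\in\mathbb R$ and integer $k\ge1$, or $a=\mu\sin\big(\tfrac{2k+1}{2}x\big)$ for some $\mu\in\mathbb R$ and integer $k\ge0$. *)

From Stdlib Require Import Reals Lra.
From Coquelicot Require Import Coquelicot.
Open Scope R_scope.

Definition deriv_on_Icc (f f' : R -> R) (lo hi : R) : Prop :=
  forall x, lo <= x <= hi ->
    filterlim (fun y => (f y - f x) / (y - x))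
      (within (fun y => lo <= y <= hi /\ y <> x) (locally x))
      (locally (f' x)).

Definition continuous_on_Icc (f : R -> R) (lo hi : R) : Prop :=
  forall x, lo <= x <= hi ->
    filterlim f (within (fun y => lo <= y <= hi) (locally x)) (locally (f x)).

(* Write A x = RInt a (-PI) x, so that A' = a and the equation reads
   A a' - a^2 + c = 0 with c = (1/PI) RInt a^2; at x = -PI it gives c = a(-PI)^2.
   If c = 0 then RInt a^2 = 0 and a = 0.  Otherwise A and a never vanish
   together, and differentiating the equation gives A a'' = a a': the Wronskian
   of A and a' vanishes, hence a' = lam A for a constant lam.  Since A(-PI) = A(PI) = 0,
   a vanishes somewhere, and there lam A^2 = -c, so lam = -w^2 < 0.  Thus
   A'' = -w^2 A with A(-PI) = 0, whence a = a(-PI) cos (w (x + PI)), and A(PI) = 0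
   forces 2w to be a positive integer n.  Conversely every s cos (n (x + PI) / 2)
   solves the problem by direct computation, and this family is the one of the
   statement: even n give the cosines, odd n the sines. *)

From Stdlib Require Import Reals Lra Lia ZArith.
From Coquelicot Require Import Coquelicot.
Open Scope R_scope.

Lemma filterlim_within_Rabs (D : R -> Prop) (f : R -> R) (x l : R) :
  filterlim f (within D (locally x)) (locally l) <->
  (forall eps, 0 < eps -> exists delta, 0 < delta /\
     forall y, D y -> Rabs (y - x) < delta -> Rabs (f y - l) < eps).
Proof.
split.
- intros H eps Heps.
  destruct (H (ball l (mkposreal eps Heps)) (locally_ball l _)) as [d Hd].
  exists d; split; [apply cond_pos |].
  intros y Dy Hy; exact (Hd y Hy Dy).
- intros H P [eps HP].
  destruct (H eps (cond_pos eps)) as [d [Hd0 Hd]].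
  exists (mkposreal d Hd0); intros y Hy Dy; apply HP, Hd; assumption.
Qed.

Lemma is_derive_continuous (f : R -> R) (x l : R) : is_derive f x l -> continuous f x.
Proof. intros Hf; apply (@ex_derive_continuous R_AbsRing R_NormedModule); exists l; exact Hf. Qed.

Lemma is_derive_const_R (c x : R) : is_derive (fun _ => c) x 0.
Proof. exact (is_derive_const c x). Qed.

Lemma is_derive_unique_R (f : R -> R) (x l l' : R) :
  is_derive f x l -> is_derive f x l' -> l = l'.
Proof. intros H H'; rewrite <- (is_derive_unique f x l H); exact (is_derive_unique f x l' H'). Qed.

Lemma is_derive_of_deriv_on_Icc (f f' : R -> R) (lo hi x : R) :
  deriv_on_Icc f f' lo hi -> lo < x < hi -> is_derive f x (f' x).
Proof.
intros Hf Hx; apply is_derive_Reals; intros eps Heps.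
destruct (proj1 (filterlim_within_Rabs _ _ _ _) (Hf x ltac:(lra)) eps Heps)
  as [d [Hd0 Hd]].
assert (Hm : 0 < Rmin d (Rmin (x - lo) (hi - x))) by (repeat apply Rmin_pos; lra).
exists (mkposreal _ Hm); simpl; intros h Hh0 Hh.
assert (H1 := Rmin_l d (Rmin (x - lo) (hi - x))).
assert (H2 := Rmin_r d (Rmin (x - lo) (hi - x))).
assert (H3 := Rmin_l (x - lo) (hi - x)).
assert (H4 := Rmin_r (x - lo) (hi - x)).
apply Rabs_def2 in Hh.
specialize (Hd (x + h)); replace (x + h - x) with h in Hd by ring.
apply Hd; [split; [lra | contradict Hh0; lra] | apply Rabs_def1; lra].
Qed.

Lemma continuous_on_Icc_of_deriv_on_Icc (f f' : R -> R) (lo hi : R) :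
  deriv_on_Icc f f' lo hi -> continuous_on_Icc f lo hi.
Proof.
intros Hf x Hx; apply filterlim_within_Rabs; intros eps Heps.
destruct (proj1 (filterlim_within_Rabs _ _ _ _) (Hf x Hx) 1 Rlt_0_1) as [d [Hd0 Hd]].
set (M := Rabs (f' x) + 1).
assert (HM : 0 < M) by (unfold M; assert (0 <= Rabs (f' x)) by apply Rabs_pos; lra).
exists (Rmin d (eps / M)); split; [apply Rmin_pos; [lra | apply Rdiv_lt_0_compat; lra] |].
intros y Dy Hy.
destruct (Req_dec y x) as [-> | Hyx]; [rewrite Rminus_eq_0, Rabs_R0; lra |].
assert (Hq := Hd y (conj Dy Hyx) (Rlt_le_trans _ _ _ Hy (Rmin_l _ _))).
assert (Hqb : Rabs ((f y - f x) / (y - x)) <= M).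
{ replace ((f y - f x) / (y - x)) with ((f y - f x) / (y - x) - f' x + f' x) by ring.
  unfold M; eapply Rle_trans; [apply Rabs_triang | lra]. }
assert (Hy' := Rlt_le_trans _ _ _ Hy (Rmin_r _ _)).
replace (f y - f x) with ((f y - f x) / (y - x) * (y - x)) by (field; lra).
rewrite Rabs_mult.
apply Rle_lt_trans with (M * Rabs (y - x)); [apply Rmult_le_compat_r; [apply Rabs_pos | lra] |].
apply (Rmult_lt_compat_l M) in Hy'; [| lra].
replace (M * (eps / M)) with eps in Hy' by (field; lra); lra.
Qed.

Definition clamp (lo hi x : R) : R := Rmax lo (Rmin x hi).

Lemma clamp_in (lo hi x : R) : lo <= hi -> lo <= clamp lo hi x <= hi.
Proof. intros; unfold clamp, Rmax, Rmin; repeat destruct Rle_dec; lra. Qed.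

Lemma clamp_id (lo hi x : R) : lo <= x <= hi -> clamp lo hi x = x.
Proof. intros; unfold clamp, Rmax, Rmin; repeat destruct Rle_dec; lra. Qed.

Lemma clamp_1_lipschitz (lo hi x y : R) :
  lo <= hi -> Rabs (clamp lo hi y - clamp lo hi x) <= Rabs (y - x).
Proof.
intros; unfold clamp, Rmax, Rmin, Rabs.
repeat destruct Rle_dec; repeat destruct Rcase_abs; lra.
Qed.

Lemma filterlim_clamp (lo hi x : R) : lo <= hi ->
  filterlim (clamp lo hi) (locally x)
    (within (fun y => lo <= y <= hi) (locally (clamp lo hi x))).
Proof.
intros Hlh P [eps HP]; exists eps; intros y Hy.
apply HP; [| apply clamp_in; exact Hlh].
apply (Rle_lt_trans _ _ _ (clamp_1_lipschitz lo hi x y Hlh)); exact Hy.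
Qed.

Lemma continuous_clamp_comp (f : R -> R) (lo hi x : R) :
  lo <= hi -> continuous_on_Icc f lo hi -> continuous (fun y => f (clamp lo hi y)) x.
Proof.
intros Hlh Hf; eapply filterlim_comp; [apply filterlim_clamp, Hlh |].
apply Hf, clamp_in, Hlh.
Qed.

Lemma locally_Ioo (lo hi x : R) : lo < x < hi -> locally x (fun t => lo < t < hi).
Proof. intros Hx; apply (locally_interval _ x lo hi); simpl; intros; lra. Qed.

Lemma is_derive_clamp_comp (f f' : R -> R) (lo hi x : R) :
  deriv_on_Icc f f' lo hi -> lo < x < hi ->
  is_derive (fun y => f (clamp lo hi y)) x (f' x).
Proof.
intros Hf Hx; apply (is_derive_ext_loc f); [| exact (is_derive_of_deriv_on_Icc _ _ _ _ _ Hf Hx)].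
apply (filter_imp (fun t => lo < t < hi)); [| exact (locally_Ioo lo hi x Hx)].
intros t Ht; rewrite clamp_id; lra.
Qed.

Lemma continuous_eq_at_right (f g : R -> R) (x b : R) :
  x < b -> continuous f x -> continuous g x ->
  (forall y, x < y < b -> f y = g y) -> f x = g x.
Proof.
intros Hxb Hf Hg Hfg.
apply (filterlim_locally_unique (F := at_right x) f);
  [exact (filterlim_filter_le_1 _ (filter_le_within _) Hf) |].
apply (filterlim_ext_loc g); [| exact (filterlim_filter_le_1 _ (filter_le_within _) Hg)].
assert (Hd : 0 < b - x) by lra.
exists (mkposreal _ Hd); intros y Hy Hxy; change (Rabs (y - x) < b - x) in Hy.
apply Rabs_def2 in Hy; symmetry; apply Hfg; lra.
Qed.

Lemma continuous_eq_at_left (f g : R -> R) (a x : R) :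
  a < x -> continuous f x -> continuous g x ->
  (forall y, a < y < x -> f y = g y) -> f x = g x.
Proof.
intros Hax Hf Hg Hfg.
apply (filterlim_locally_unique (F := at_left x) f);
  [exact (filterlim_filter_le_1 _ (filter_le_within _) Hf) |].
apply (filterlim_ext_loc g); [| exact (filterlim_filter_le_1 _ (filter_le_within _) Hg)].
assert (Hd : 0 < x - a) by lra.
exists (mkposreal _ Hd); intros y Hy Hyx; change (Rabs (y - x) < x - a) in Hy.
apply Rabs_def2 in Hy; symmetry; apply Hfg; lra.
Qed.

Lemma eq_Icc_of_eq_Ioo (f g : R -> R) (lo hi : R) :
  lo < hi -> (forall x, continuous f x) -> (forall x, continuous g x) ->
  (forall x, lo < x < hi -> f x = g x) -> forall x, lo <= x <= hi -> f x = g x.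
Proof.
intros Hlh Hf Hg Hfg x Hx.
destruct (Rlt_or_le x hi) as [Hxh | Hxh].
- apply (continuous_eq_at_right f g x hi); auto; intros y Hy; apply Hfg; lra.
- apply (continuous_eq_at_left f g lo x); auto; [lra |]; intros y Hy; apply Hfg; lra.
Qed.

Lemma eq_Icc_of_eq_Ioo_within (f g : R -> R) (lo hi : R) :
  lo < hi -> continuous_on_Icc f lo hi -> (forall x, continuous g x) ->
  (forall x, lo < x < hi -> f x = g x) -> forall x, lo <= x <= hi -> f x = g x.
Proof.
intros Hlh Hf Hg Hfg x Hx.
transitivity (f (clamp lo hi x)); [rewrite clamp_id; auto |].
apply (eq_Icc_of_eq_Ioo (fun y => f (clamp lo hi y)) g lo hi); auto.
- intros y; apply continuous_clamp_comp; [lra | exact Hf].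
- intros y Hy; rewrite clamp_id; [apply Hfg |]; lra.
Qed.

Lemma is_derive_0_Ioo_const (f : R -> R) (p q : R) :
  (forall x, p < x < q -> is_derive f x 0) ->
  forall x y, p < x < q -> p < y < q -> f x = f y.
Proof.
intros Hf.
assert (Hle : forall x y, p < x < q -> p < y < q -> x < y -> f x = f y).
{ intros x y Hx Hy Hxy.
  destruct (MVT_cor2 f (fun _ => 0) x y Hxy) as [c [Hc _]].
  - intros c Hc; apply is_derive_Reals, Hf; lra.
  - lra. }
intros x y Hx Hy; destruct (Rtotal_order x y) as [Hxy | [-> | Hxy]]; auto.
symmetry; auto.
Qed.

Lemma locally_const_Ioo_const (K : R -> R) (p q : R) :
  (forall x, p < x < q -> locally x (fun y => K y = K x)) ->
  forall x y, p < x < q -> p < y < q -> K x = K y.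
Proof.
intros HK; apply is_derive_0_Ioo_const; intros x Hx.
apply (is_derive_ext_loc (fun _ => K x)); [| apply is_derive_const_R].
apply (filter_imp (fun y => K y = K x)); [intros y Hy; auto | exact (HK x Hx)].
Qed.

Lemma is_derive_isolated_value (f : R -> R) (x l : R) :
  is_derive f x l -> l <> 0 ->
  exists d, 0 < d /\ forall y, y <> x -> Rabs (y - x) < d -> f y <> f x.
Proof.
intros Hf Hl; apply is_derive_Reals in Hf.
destruct (Hf (Rabs l) (Rabs_pos_lt _ Hl)) as [d Hd].
exists d; split; [apply cond_pos |]; intros y Hyx Hy Hfy.
assert (Hh : y - x <> 0) by lra.
specialize (Hd (y - x) Hh Hy); replace (x + (y - x)) with y in Hd by ring.
rewrite Hfy in Hd; replace ((f x - f x) / (y - x) - l) with (- l) in Hd by (field; lra).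
rewrite Rabs_Ropp in Hd; lra.
Qed.

Lemma continuous_locally_neq_0 (f : R -> R) (x : R) :
  continuous f x -> f x <> 0 -> locally x (fun y => f y <> 0).
Proof.
intros Hf Hfx.
apply (filter_imp (fun y => ball (f x) (mkposreal _ (Rabs_pos_lt _ Hfx)) (f y)));
  [| apply Hf, locally_ball].
intros y Hy Hfy; change (Rabs (f y - f x) < Rabs (f x)) in Hy.
rewrite Hfy, Rminus_0_l, Rabs_Ropp in Hy; lra.
Qed.

Lemma proportional_of_wronskian_0_nonvanishing (f df g dg : R -> R) (p q : R) :
  (forall x, p < x < q -> is_derive f x (df x)) ->
  (forall x, p < x < q -> is_derive g x (dg x)) ->
  (forall x, p < x < q -> f x * dg x = df x * g x) ->
  (forall x, p < x < q -> f x <> 0) ->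
  exists k, forall x, p < x < q -> g x = k * f x.
Proof.
intros Hf Hg Hw Hnz; set (m := (p + q) / 2).
exists (g m / f m); intros x Hx.
assert (Hm : p < m < q) by (unfold m; lra).
assert (Hratio : g x / f x = g m / f m).
{ apply (is_derive_0_Ioo_const (fun t => g t / f t) p q); auto; intros t Ht.
  replace 0 with ((dg t * f t - g t * df t) / f t ^ 2)
    by (rewrite (Rmult_comm (dg t)), Hw by exact Ht; field; auto).
  apply is_derive_div; auto. }
rewrite <- Hratio; field; auto.
Qed.

Section Wronskian.

Variables (f df g dg : R -> R) (p q : R).
Hypothesis Hf : forall x, p < x < q -> is_derive f x (df x).
Hypothesis Hg : forall x, p < x < q -> is_derive g x (dg x).
Hypothesis Hw : forall x, p < x < q -> f x * dg x = df x * g x.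
Hypothesis Hnz : forall x, p < x < q -> f x = 0 -> df x <> 0.

(* At a zero of f the ratio g / f is replaced by its limit dg / df. *)
Let K x := if Req_EM_T (f x) 0 then dg x / df x else g x / f x.

Lemma wronskian_ratio_locally_const_at_nonzero (x : R) :
  p < x < q -> f x <> 0 -> locally x (fun y => K y = K x).
Proof.
intros Hx Hfx.
assert (Hcont := is_derive_continuous f x (df x) (Hf x Hx)).
destruct (filter_and _ _ (locally_Ioo p q x Hx) (continuous_locally_neq_0 f x Hcont Hfx))
  as [e He].
assert (Hball : forall y, x - e < y < x + e -> p < y < q /\ f y <> 0).
{ intros y Hy; apply He; change (Rabs (y - x) < e); apply Rabs_def1; lra. }
destruct (proportional_of_wronskian_0_nonvanishing f df g dg (x - e) (x + e))
  as [k Hk]; try (intros y Hy; apply Hball in Hy as [Hy Hfy]; solve [auto]).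
assert (HKk : forall y, x - e < y < x + e -> K y = k).
{ intros y Hy; unfold K; destruct (Req_EM_T (f y) 0) as [Hfy | Hfy];
    [exfalso; apply (Hball y Hy), Hfy | rewrite Hk by exact Hy; field; exact Hfy]. }
exists e; intros y Hy; change (Rabs (y - x) < e) in Hy; apply Rabs_def2 in Hy.
pose proof (cond_pos e); rewrite !HKk; lra.
Qed.

Let g_eq_0_at_zero (x : R) : p < x < q -> f x = 0 -> g x = 0.
Proof.
intros Hx Hfx; assert (H := Hw x Hx); rewrite Hfx, Rmult_0_l in H.
destruct (Rmult_integral _ _ (eq_sym H)) as [H' | H']; [exfalso; exact (Hnz x Hx Hfx H') | exact H'].
Qed.

Lemma wronskian_ratio_const_beside_zero (x u v : R) :
  p < x < q -> f x = 0 -> (u = x \/ v = x) -> u < v ->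
  (forall y, u < y < v -> p < y < q /\ f y <> 0) -> forall y, u < y < v -> K y = K x.
Proof.
intros Hx Hfx Huv Huv' Hin.
assert (Hdf := Hnz x Hx Hfx).
destruct (proportional_of_wronskian_0_nonvanishing f df g dg u v) as [k Hk];
  try (intros y Hy; destruct (Hin y Hy); solve [auto]).
(* g - k f vanishes beside x, so its derivative at x vanishes *)
assert (Hkx : dg x - k * df x = 0).
{ destruct (Req_dec (dg x - k * df x) 0) as [E | E]; [exact E | exfalso].
  assert (Hphi : is_derive (fun t => g t - k * f t) x (dg x - k * df x))
    by (apply (is_derive_minus g (fun t => k * f t) x (dg x) (k * df x));
        [| apply is_derive_scal]; auto).
  destruct (is_derive_isolated_value _ x _ Hphi E) as [d [Hd0 Hd]].
  set (t := Rmin d (v - u) / 2).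
  assert (Ht : 0 < t < d /\ t < v - u).
  { assert (0 < Rmin d (v - u)) by (apply Rmin_pos; lra).
    pose proof (Rmin_l d (v - u)); pose proof (Rmin_r d (v - u)); unfold t; lra. }
  assert (Hy : exists y, u < y < v /\ y <> x /\ Rabs (y - x) < d).
  { destruct Huv as [-> | ->]; [exists (x + t) | exists (x - t)];
      (split; [lra | split; [lra | apply Rabs_def1; lra]]). }
  destruct Hy as [y [Hy [Hyx Hyd]]].
  apply (Hd y Hyx Hyd); rewrite Hk, g_eq_0_at_zero, Hfx by (auto || exact Hy); ring. }
intros y Hy; destruct (Hin y Hy) as [_ Hfy].
unfold K; destruct (Req_EM_T (f y) 0) as [E | _]; [contradiction |].
destruct (Req_EM_T (f x) 0) as [_ | E]; [| contradiction].
rewrite Hk by exact Hy; replace (dg x) with (k * df x) by lra; field; auto.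
Qed.

Lemma wronskian_ratio_locally_const_at_zero (x : R) :
  p < x < q -> f x = 0 -> locally x (fun y => K y = K x).
Proof.
intros Hx Hfx.
destruct (is_derive_isolated_value f x (df x) (Hf x Hx) (Hnz x Hx Hfx)) as [d [Hd0 Hd]].
set (e := Rmin d (Rmin (x - p) (q - x))).
assert (He : 0 < e) by (repeat apply Rmin_pos; lra).
assert (He1 := Rmin_l d (Rmin (x - p) (q - x))).
assert (He2 := Rmin_r d (Rmin (x - p) (q - x))).
assert (He3 := Rmin_l (x - p) (q - x)); assert (He4 := Rmin_r (x - p) (q - x)).
fold e in He1, He2.
assert (Hin : forall y, x - e < y < x + e -> y <> x -> p < y < q /\ f y <> 0).
{ intros y Hy Hyx; split; [lra |]; rewrite <- Hfx; apply Hd; [exact Hyx |].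
  apply Rabs_def1; lra. }
exists (mkposreal e He); intros y Hy; change (Rabs (y - x) < e) in Hy; apply Rabs_def2 in Hy.
destruct (Rtotal_order y x) as [Hyx | [-> | Hyx]]; [| reflexivity |].
- apply (wronskian_ratio_const_beside_zero x (x - e) x);
    [exact Hx | exact Hfx | right; reflexivity | lra | intros z Hz; apply Hin; lra | lra].
- apply (wronskian_ratio_const_beside_zero x x (x + e));
    [exact Hx | exact Hfx | left; reflexivity | lra | intros z Hz; apply Hin; lra | lra].
Qed.

Lemma proportional_of_wronskian_0 : exists k, forall x, p < x < q -> g x = k * f x.
Proof.
assert (HK : forall x y, p < x < q -> p < y < q -> K x = K y).
{ apply locally_const_Ioo_const; intros x Hx; destruct (Req_dec (f x) 0).
  - apply wronskian_ratio_locally_const_at_zero; auto.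
  - apply wronskian_ratio_locally_const_at_nonzero; auto. }
exists (K ((p + q) / 2)); intros x Hx.
rewrite <- (HK x) by lra; unfold K; destruct (Req_EM_T (f x) 0) as [E | E].
- rewrite g_eq_0_at_zero, E by assumption; ring.
- field; exact E.
Qed.

End Wronskian.

Lemma harmonic_energy_is_derive_0 (u v : R -> R) (w x : R) :
  is_derive v x (u x) -> is_derive u x (- (w * w) * v x) ->
  is_derive (fun t => u t ^ 2 + w ^ 2 * v t ^ 2) x 0.
Proof.
intros Hv Hu.
replace 0 with (INR 2 * (- (w * w) * v x) * u x ^ pred 2
                + w ^ 2 * (INR 2 * u x * v x ^ pred 2)) by (simpl; ring).
apply (is_derive_plus (fun t => u t ^ 2) (fun t => w ^ 2 * v t ^ 2)).
- apply is_derive_pow, Hu.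
- apply is_derive_scal, is_derive_pow, Hv.
Qed.

Lemma continuous_sq (u : R -> R) (x : R) :
  continuous u x -> continuous (fun t => u t ^ 2) x.
Proof.
intros Hu; apply (continuous_comp u (fun z => z ^ 2)); [exact Hu |].
apply (is_derive_continuous _ _ (2 * u x)); auto_derive; [exact I | ring].
Qed.

Lemma continuous_sum_sq (u v : R -> R) (c x : R) :
  continuous u x -> continuous v x -> continuous (fun t => u t ^ 2 + c * v t ^ 2) x.
Proof.
intros Hu Hv.
apply (continuous_plus (fun t => u t ^ 2) (fun t => c * v t ^ 2)); [apply continuous_sq, Hu |].
apply (continuous_scal_r c (fun t => v t ^ 2)), continuous_sq, Hv.
Qed.

Lemma sum_sq_eq_0 (u v c : R) : 0 < c -> u ^ 2 + c * v ^ 2 = 0 -> u = 0 /\ v = 0.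
Proof.
intros Hc H.
assert (Hu : 0 <= u ^ 2) by apply pow2_ge_0.
assert (Hv : 0 <= c * v ^ 2) by (apply Rmult_le_pos; [lra | apply pow2_ge_0]).
assert (Hu0 : u ^ 2 = 0) by lra.
assert (Hv0 : v ^ 2 = 0) by (apply (Rmult_eq_reg_l c); lra).
split; apply Rsqr_0_uniq; unfold Rsqr; simpl in Hu0, Hv0; lra.
Qed.

Lemma harmonic_oscillator_unique (P Q : R -> R) (w lo hi : R) :
  w <> 0 -> lo < hi ->
  (forall x, continuous P x) -> (forall x, continuous Q x) ->
  (forall x, lo < x < hi -> is_derive P x (Q x)) ->
  (forall x, lo < x < hi -> is_derive Q x (- (w * w) * P x)) ->
  forall x, lo <= x <= hi ->
    P x = P lo * cos (w * (x - lo)) + Q lo / w * sin (w * (x - lo)) /\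
    Q x = Q lo * cos (w * (x - lo)) - w * P lo * sin (w * (x - lo)).
Proof.
intros Hw Hlh HPc HQc HP HQ.
set (Y := fun x => P lo * cos (w * (x - lo)) + Q lo / w * sin (w * (x - lo))).
set (Z := fun x => Q lo * cos (w * (x - lo)) - w * P lo * sin (w * (x - lo))).
assert (HY : forall x, is_derive Y x (Z x))
  by (intros x; unfold Y, Z; auto_derive; [exact I | unfold Rminus; field; exact Hw]).
assert (HZ : forall x, is_derive Z x (- (w * w) * Y x))
  by (intros x; unfold Y, Z; auto_derive; [exact I | unfold Rminus; field; exact Hw]).
(* the energy of the difference P - Y is conserved and vanishes at lo *)
set (E := fun t => (Q t - Z t) ^ 2 + w ^ 2 * (P t - Y t) ^ 2).
assert (HEc : forall x, continuous E x).
{ intros x; apply continuous_sum_sq.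
  - apply (continuous_minus Q Z); [| apply (is_derive_continuous _ _ _ (HZ x))]; auto.
  - apply (continuous_minus P Y); [| apply (is_derive_continuous _ _ _ (HY x))]; auto. }
assert (HE : forall x y, lo < x < hi -> lo < y < hi -> E x = E y).
{ apply is_derive_0_Ioo_const; intros x Hx; apply harmonic_energy_is_derive_0.
  - apply (is_derive_minus P Y x (Q x) (Z x)); auto.
  - replace (- (w * w) * (P x - Y x)) with (- (w * w) * P x - - (w * w) * Y x) by ring.
    apply (is_derive_minus Q Z); auto. }
assert (HElo : E lo = 0)
  by (unfold E, Y, Z; rewrite Rminus_eq_0, Rmult_0_r, cos_0, sin_0; ring).
set (m := (lo + hi) / 2).
assert (HEm : forall x, lo <= x <= hi -> E x = E m).
{ apply (eq_Icc_of_eq_Ioo E (fun _ => E m)); [lra | exact HEc | |].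
  - intros; apply continuous_const.
  - intros y Hy; apply HE; unfold m; lra. }
intros x Hx.
assert (HEx : E x = 0) by (rewrite (HEm x Hx), <- (HEm lo) by lra; exact HElo).
destruct (sum_sq_eq_0 _ _ _ (pow2_gt_0 _ Hw) HEx); unfold Y, Z in *; split; lra.
Qed.

Lemma is_derive_RInt_continuous (f : R -> R) (lo x : R) :
  (forall t, continuous f t) -> is_derive (fun y => RInt f lo y) x (f x).
Proof.
intros Hf; apply (is_derive_RInt f _ lo x); [| apply Hf].
apply filter_forall; intros y.
apply (@RInt_correct R_CompleteNormedModule), (@ex_RInt_continuous R_CompleteNormedModule).
intros; apply Hf.
Qed.

Lemma RInt_antiderivative (F f : R -> R) (lo hi : R) :
  (forall x, is_derive F x (f x)) -> (forall x, continuous f x) ->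
  RInt f lo hi = F hi - F lo.
Proof.
intros HF Hf; apply is_RInt_unique.
apply (@is_RInt_derive R_CompleteNormedModule); intros; [apply HF | apply Hf].
Qed.

Lemma continuous_nonneg_RInt_eq_0 (g : R -> R) (lo hi : R) :
  lo < hi -> (forall x, continuous g x) -> (forall x, 0 <= g x) ->
  RInt g lo hi = 0 -> forall x, lo <= x <= hi -> g x = 0.
Proof.
intros Hlh Hc Hpos HI.
set (G := fun y => RInt g lo y).
assert (HG : forall x, is_derive G x (g x)) by (intros; apply is_derive_RInt_continuous, Hc).
assert (Hmono : forall u v, u <= v -> G u <= G v).
{ intros u v Huv.
  assert (0 <= RInt g u v).
  { apply RInt_ge_0; auto.
    apply (@ex_RInt_continuous R_CompleteNormedModule); intros; apply Hc. }
  rewrite (RInt_antiderivative G g u v HG Hc) in *; lra. }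
assert (HG0 : forall y, lo <= y <= hi -> G y = 0).
{ intros y Hy; assert (G lo = 0) by apply (@RInt_point R_CompleteNormedModule).
  assert (G hi = 0) by exact HI.
  pose proof (Hmono lo y (proj1 Hy)); pose proof (Hmono y hi (proj2 Hy)); lra. }
apply (eq_Icc_of_eq_Ioo g (fun _ => 0)); auto; [intros; apply continuous_const |].
intros x Hx; apply (is_derive_unique_R G x); [apply HG |].
apply (is_derive_ext_loc (fun _ => 0)); [| apply is_derive_const_R].
apply (filter_imp (fun t => lo < t < hi)); [| exact (locally_Ioo lo hi x Hx)].
intros t Ht; symmetry; apply HG0; lra.
Qed.

Lemma sin_INR_mult_PI (k : nat) : sin (INR k * PI) = 0.
Proof. apply sin_eq_0_1; exists (Z.of_nat k); rewrite <- INR_IZR_INZ; reflexivity. Qed.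

Lemma cos_half_odd_mult_PI (k : nat) : cos ((2 * INR k + 1) / 2 * PI) = 0.
Proof. apply cos_eq_0_1; exists (Z.of_nat k); rewrite <- INR_IZR_INZ; field. Qed.

Lemma cos_add_sin_eq_0 (t u : R) : sin u = 0 -> cos (t + u) = cos u * cos t.
Proof. intros Hu; rewrite cos_plus, Hu; ring. Qed.

Lemma cos_add_cos_eq_0 (t u : R) : cos u = 0 -> cos (t + u) = - sin u * sin t.
Proof. intros Hu; rewrite cos_plus, Hu; ring. Qed.

Lemma cos_sq_of_sin_eq_0 (u : R) : sin u = 0 -> cos u * cos u = 1.
Proof. intros Hu; pose proof (sin2_cos2 u) as H; unfold Rsqr in H; rewrite Hu in H; lra. Qed.

Lemma sin_sq_of_cos_eq_0 (u : R) : cos u = 0 -> sin u * sin u = 1.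
Proof. intros Hu; pose proof (sin2_cos2 u) as H; unfold Rsqr in H; rewrite Hu in H; lra. Qed.

Lemma half_even_shift (k : nat) (x : R) :
  INR (2 * k) / 2 * (x + PI) = INR k * x + INR k * PI.
Proof. rewrite mult_INR; replace (INR 2) with 2 by (simpl; ring); field. Qed.

Lemma half_odd_shift (k : nat) (x : R) :
  INR (2 * k + 1) / 2 * (x + PI) = (2 * INR k + 1) / 2 * x + (2 * INR k + 1) / 2 * PI.
Proof. rewrite plus_INR, mult_INR; replace (INR 2) with 2 by (simpl; ring); simpl; field. Qed.

Lemma shifted_cos_families (a : R -> R) (D : R -> Prop) :
  (exists (s : R) (n : nat), (1 <= n)%nat /\
     forall x, D x -> a x = s * cos (INR n / 2 * (x + PI)))
  <->
  ((exists (mu : R) (k : nat), (1 <= k)%nat /\ forall x, D x -> a x = mu * cos (INR k * x))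
   \/
   (exists (mu : R) (k : nat), forall x, D x -> a x = mu * sin ((2 * INR k + 1) / 2 * x))).
Proof.
split.
- intros [s [n [Hn Ha]]]; destruct (Nat.Even_or_Odd n) as [[k ->] | [k ->]].
  + left; exists (s * cos (INR k * PI)), k; split; [lia |]; intros x Hx.
    rewrite Ha, half_even_shift, cos_add_sin_eq_0 by (auto; apply sin_INR_mult_PI); ring.
  + right; exists (- s * sin ((2 * INR k + 1) / 2 * PI)), k; intros x Hx.
    rewrite Ha, half_odd_shift, cos_add_cos_eq_0 by (auto; apply cos_half_odd_mult_PI); ring.
- intros [[mu [k [Hk Ha]]] | [mu [k Ha]]].
  + exists (mu * cos (INR k * PI)), (2 * k)%nat; split; [lia |]; intros x Hx.
    rewrite Ha, half_even_shift, cos_add_sin_eq_0 by (auto; apply sin_INR_mult_PI).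
    transitivity (mu * cos (INR k * x) * (cos (INR k * PI) * cos (INR k * PI))); [| ring].
    rewrite (cos_sq_of_sin_eq_0 _ (sin_INR_mult_PI k)); ring.
  + exists (- mu * sin ((2 * INR k + 1) / 2 * PI)), (2 * k + 1)%nat; split; [lia |].
    intros x Hx.
    rewrite Ha, half_odd_shift, cos_add_cos_eq_0 by (auto; apply cos_half_odd_mult_PI).
    transitivity (mu * sin ((2 * INR k + 1) / 2 * x)
                  * (sin ((2 * INR k + 1) / 2 * PI) * sin ((2 * INR k + 1) / 2 * PI)));
      [| ring].
    rewrite (sin_sq_of_cos_eq_0 _ (cos_half_odd_mult_PI k)); ring.
Qed.

Lemma RInt_shifted_cos (s m x : R) : 0 < m ->
  RInt (fun t => s * cos (m * (t + PI))) (- PI) x = s / m * sin (m * (x + PI)).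
Proof.
intros Hm; rewrite (RInt_antiderivative (fun t => s / m * sin (m * (t + PI)))).
- rewrite Rplus_opp_l, Rmult_0_r, sin_0; simpl; ring.
- intros t; auto_derive; [exact I | field; lra].
- intros t; apply (is_derive_continuous _ _ (s * (- m * sin (m * (t + PI))))).
  auto_derive; [exact I | ring].
Qed.

Lemma RInt_shifted_cos_sq (s m : R) : 0 < m -> sin (2 * m * PI) = 0 ->
  RInt (fun t => (s * cos (m * (t + PI))) ^ 2) (- PI) PI = s ^ 2 * PI.
Proof.
intros Hm Hsin.
rewrite (RInt_antiderivative (fun t => s ^ 2 * (t / 2 + sin (2 * (m * (t + PI))) / (4 * m)))).
- replace (m * (PI + PI)) with (2 * m * PI) by ring.
  rewrite Rplus_opp_l, Rmult_0_r, Rmult_0_r, sin_0, sin_2a, Hsin; simpl; field; lra.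
- intros t; auto_derive; [exact I | rewrite cos_2a_cos; field; lra].
- intros t; apply (is_derive_continuous _ _
    (2 * (s * cos (m * (t + PI))) * (s * (- m * sin (m * (t + PI)))))).
  auto_derive; [exact I | ring].
Qed.

Lemma shifted_cos_solves (a a1 : R -> R) (s m : R) :
  deriv_on_Icc a a1 (- PI) PI -> continuous_on_Icc a1 (- PI) PI ->
  0 < m -> sin (2 * m * PI) = 0 ->
  (forall x, - PI <= x <= PI -> a x = s * cos (m * (x + PI))) ->
  RInt a (- PI) PI = 0 /\
  forall x, - PI <= x <= PI ->
    RInt a (- PI) x * a1 x - (a x) ^ 2 + / PI * RInt (fun t => (a t) ^ 2) (- PI) PI = 0.
Proof.
intros Ha1 Ha1c Hm Hsin Ha.
assert (HPI := PI_RGT_0).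
set (f1 := fun x => - (s * m) * sin (m * (x + PI))).
assert (Hprim : forall x, - PI <= x <= PI -> RInt a (- PI) x = s / m * sin (m * (x + PI))).
{ intros x Hx; rewrite <- (RInt_shifted_cos s m x Hm).
  apply RInt_ext; rewrite Rmin_left, Rmax_right by lra; intros t Ht; apply Ha; lra. }
assert (Hsq : RInt (fun t => a t ^ 2) (- PI) PI = s ^ 2 * PI).
{ rewrite <- (RInt_shifted_cos_sq s m Hm Hsin).
  apply RInt_ext; rewrite Rmin_left, Rmax_right by lra; intros t Ht; rewrite Ha by lra; reflexivity. }
assert (Ha1f1 : forall x, - PI <= x <= PI -> a1 x = f1 x).
{ apply (eq_Icc_of_eq_Ioo_within a1 f1); [lra | exact Ha1c | |].
  - intros x; apply (is_derive_continuous _ _ (- (s * m) * (m * cos (m * (x + PI))))).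
    unfold f1; auto_derive; [exact I | ring].
  - intros x Hx; apply (is_derive_unique_R a x);
      [exact (is_derive_of_deriv_on_Icc _ _ _ _ _ Ha1 Hx) |].
    apply (is_derive_ext_loc (fun t => s * cos (m * (t + PI))));
      [| unfold f1; auto_derive; [exact I | ring]].
    apply (filter_imp (fun t => - PI < t < PI)); [| exact (locally_Ioo _ _ x Hx)].
    intros t Ht; symmetry; apply Ha; lra. }
split.
- rewrite Hprim by lra; replace (m * (PI + PI)) with (2 * m * PI) by ring.
  rewrite Hsin; simpl; ring.
- intros x Hx; rewrite Hprim, Hsq, Ha1f1, Ha by exact Hx; unfold f1.
  pose proof (sin2_cos2 (m * (x + PI))) as Hpyth; unfold Rsqr in Hpyth.
  transitivity (s * s * (1 - (sin (m * (x + PI)) * sin (m * (x + PI))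
                              + cos (m * (x + PI)) * cos (m * (x + PI)))));
    [simpl; field; lra | rewrite Hpyth; ring].
Qed.

Section Forward.

Variables a a1 a2 : R -> R.
Hypothesis Ha1 : deriv_on_Icc a a1 (- PI) PI.
Hypothesis Ha2 : deriv_on_Icc a1 a2 (- PI) PI.
Hypothesis Hmean : RInt a (- PI) PI = 0.
Hypothesis Hode : forall x, - PI <= x <= PI ->
  RInt a (- PI) x * a1 x - (a x) ^ 2 + / PI * RInt (fun t => (a t) ^ 2) (- PI) PI = 0.

Let ae x := a (clamp (- PI) PI x).
Let A x := RInt ae (- PI) x.
Let c := / PI * RInt (fun t => (a t) ^ 2) (- PI) PI.

Let neg_PI_lt_PI : - PI < PI.
Proof. pose proof PI_RGT_0; lra. Qed.

Let ae_continuous x : continuous ae x.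
Proof.
apply continuous_clamp_comp; [lra | exact (continuous_on_Icc_of_deriv_on_Icc _ _ _ _ Ha1)].
Qed.

Let ae_eq x : - PI <= x <= PI -> ae x = a x.
Proof. intros Hx; unfold ae; rewrite clamp_id; auto. Qed.

Let A_is_derive x : is_derive A x (ae x).
Proof. apply is_derive_RInt_continuous, ae_continuous. Qed.

Let A_eq x : - PI <= x <= PI -> RInt a (- PI) x = A x.
Proof.
intros Hx; apply RInt_ext; rewrite Rmin_left, Rmax_right by lra.
intros t Ht; rewrite ae_eq; auto; lra.
Qed.

Let A_lo : A (- PI) = 0.
Proof. apply (@RInt_point R_CompleteNormedModule). Qed.

Let A_hi : A PI = 0.
Proof. rewrite <- A_eq by lra; exact Hmean. Qed.

Let ode_A x : - PI <= x <= PI -> A x * a1 x - ae x ^ 2 + c = 0.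
Proof. intros Hx; rewrite <- A_eq, ae_eq by exact Hx; exact (Hode x Hx). Qed.

Let c_eq : c = a (- PI) ^ 2.
Proof. pose proof (ode_A (- PI) ltac:(lra)) as H; rewrite A_lo, ae_eq in H by lra; lra. Qed.

Lemma ode_degenerate : a (- PI) = 0 -> forall x, - PI <= x <= PI -> a x = 0.
Proof.
intros Ha0 x Hx; rewrite <- ae_eq by exact Hx.
assert (HI : RInt (fun t => ae t ^ 2) (- PI) PI = 0).
{ rewrite (RInt_ext _ (fun t => a t ^ 2)).
  - apply (Rmult_eq_reg_l (/ PI)); [| apply Rinv_neq_0_compat, PI_neq0].
    fold c; rewrite c_eq, Ha0; simpl; ring.
  - rewrite Rmin_left, Rmax_right by lra; intros t Ht; rewrite ae_eq; auto; lra. }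
assert (H := continuous_nonneg_RInt_eq_0 (fun t => ae t ^ 2) _ _ neg_PI_lt_PI
  (fun t => continuous_sq ae t (ae_continuous t)) (fun t => pow2_ge_0 (ae t)) HI x Hx).
apply Rsqr_0_uniq; unfold Rsqr; simpl in H; lra.
Qed.

Let ode_wronskian x : - PI < x < PI -> A x * a2 x = ae x * a1 x.
Proof.
intros Hx.
assert (Hd : is_derive (fun t => A t * a1 t - ae t ^ 2 + c) x
               (ae x * a1 x + A x * a2 x - INR 2 * a1 x * ae x ^ pred 2 + 0)).
{ apply (is_derive_plus (fun t => A t * a1 t - ae t ^ 2) (fun _ => c));
    [apply (is_derive_minus (fun t => A t * a1 t) (fun t => ae t ^ 2)) | apply is_derive_const_R].
  - apply (is_derive_mult A a1); [apply A_is_derive | exact (is_derive_of_deriv_on_Icc _ _ _ _ _ Ha2 Hx) |].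
    intros; apply Rmult_comm.
  - apply is_derive_pow, (is_derive_clamp_comp _ _ _ _ _ Ha1 Hx). }
assert (Hd0 : is_derive (fun t => A t * a1 t - ae t ^ 2 + c) x 0).
{ apply (is_derive_ext_loc (fun _ => 0)); [| apply is_derive_const_R].
  apply (filter_imp (fun t => - PI < t < PI)); [| exact (locally_Ioo _ _ x Hx)].
  intros t Ht; symmetry; apply ode_A; lra. }
pose proof (is_derive_unique_R _ _ _ _ Hd Hd0); simpl in *; lra.
Qed.

Lemma ode_proportional : a (- PI) <> 0 ->
  exists lam, forall x, - PI < x < PI -> a1 x = lam * A x.
Proof.
intros Ha0; apply (proportional_of_wronskian_0 A ae a1 a2).
- intros; apply A_is_derive.
- intros x Hx; exact (is_derive_of_deriv_on_Icc _ _ _ _ _ Ha2 Hx).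
- exact ode_wronskian.
- intros x Hx HAx Hae; pose proof (ode_A x ltac:(lra)) as H.
  rewrite HAx, Hae, c_eq in H; apply Ha0, Rsqr_0_uniq; unfold Rsqr; simpl in H; lra.
Qed.

Lemma ode_proportionality_neg (lam : R) : a (- PI) <> 0 ->
  (forall x, - PI < x < PI -> a1 x = lam * A x) -> lam < 0.
Proof.
intros Ha0 Hlam.
(* A vanishes at both ends, so its derivative ae vanishes at some xi *)
destruct (MVT_cor2 A ae (- PI) PI neg_PI_lt_PI) as [xi [Hxi Hxi']];
  [intros; apply is_derive_Reals, A_is_derive |].
rewrite A_lo, A_hi in Hxi.
assert (Haexi : ae xi = 0) by (apply (Rmult_eq_reg_r (PI - - PI)); lra).
pose proof (ode_A xi ltac:(lra)) as H; rewrite Hlam, Haexi, c_eq in H by exact Hxi'.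
pose proof (pow2_gt_0 _ Ha0); destruct (Rlt_or_le lam 0) as [| Hl]; [assumption |].
assert (0 <= lam * A xi * A xi) by (rewrite Rmult_assoc; apply Rmult_le_pos; [lra | apply Rle_0_sqr]).
simpl in *; lra.
Qed.

Lemma ode_nondegenerate : a (- PI) <> 0 ->
  exists n : nat, (1 <= n)%nat /\
    forall x, - PI <= x <= PI -> a x = a (- PI) * cos (INR n / 2 * (x + PI)).
Proof.
intros Ha0; destruct (ode_proportional Ha0) as [lam Hlam].
assert (Hneg := ode_proportionality_neg lam Ha0 Hlam).
set (w := sqrt (- lam)).
assert (Hw : 0 < w) by (apply sqrt_lt_R0; lra).
assert (Hww : w * w = - lam) by (apply sqrt_sqrt; lra).
assert (Hae' : forall x, - PI < x < PI -> is_derive ae x (- (w * w) * A x)).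
{ intros x Hx; rewrite Hww, Ropp_involutive, <- Hlam by exact Hx.
  exact (is_derive_clamp_comp _ _ _ _ _ Ha1 Hx). }
assert (Hsol := harmonic_oscillator_unique A ae w (- PI) PI ltac:(lra) neg_PI_lt_PI
  (fun x => is_derive_continuous _ _ _ (A_is_derive x)) ae_continuous
  (fun x _ => A_is_derive x) Hae').
rewrite A_lo, ae_eq in Hsol by lra.
(* A PI = 0 forces 2 w to be an integer *)
destruct (Hsol PI) as [HApi _]; [lra |]; rewrite A_hi in HApi.
assert (Hsin : sin (w * (PI - - PI)) = 0).
{ assert (H : a (- PI) * sin (w * (PI - - PI)) = 0).
  { apply (Rmult_eq_reg_l (/ w)); [| apply Rinv_neq_0_compat; lra].
    unfold Rdiv in HApi; lra. }
  destruct (Rmult_integral _ _ H); [contradiction | assumption]. }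
destruct (sin_eq_0_0 _ Hsin) as [n Hn].
assert (Hwn : w = IZR n / 2) by (apply (Rmult_eq_reg_r PI); [| apply PI_neq0]; lra).
assert (Hn0 : (0 < n)%Z) by (apply lt_IZR; lra).
exists (Z.to_nat n); split; [lia |]; intros x Hx.
rewrite INR_IZR_INZ, Z2Nat.id, <- Hwn by lia.
rewrite <- ae_eq by exact Hx; destruct (Hsol x Hx) as [_ ->].
replace (x - - PI) with (x + PI) by ring; ring.
Qed.

Theorem ode_solution_shifted_cos :
  exists (s : R) (n : nat), (1 <= n)%nat /\
    forall x, - PI <= x <= PI -> a x = s * cos (INR n / 2 * (x + PI)).
Proof.
destruct (Req_dec (a (- PI)) 0) as [Ha0 | Ha0].
- exists 0, 1%nat; split; [lia |]; intros x Hx; rewrite ode_degenerate by assumption; ring.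
- destruct (ode_nondegenerate Ha0) as [n Hn]; exists (a (- PI)), n; exact Hn.
Qed.

End Forward.

Theorem proposition2p1 (a a1 a2 : R -> R)
  (Ha1 : deriv_on_Icc a a1 (- PI) PI)
  (Ha2 : deriv_on_Icc a1 a2 (- PI) PI)
  (Hc2 : continuous_on_Icc a2 (- PI) PI) :
  (RInt a (- PI) PI = 0 /\
   forall x, - PI <= x <= PI ->
     RInt a (- PI) x * a1 x - (a x) ^ 2
       + / PI * RInt (fun t => (a t) ^ 2) (- PI) PI = 0)
  <->
  ((exists (mu : R) (k : nat), (1 <= k)%nat /\
      forall x, - PI <= x <= PI -> a x = mu * cos (INR k * x))
   \/
   (exists (mu : R) (k : nat),
      forall x, - PI <= x <= PI -> a x = mu * sin ((2 * INR k + 1) / 2 * x))).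
Proof.
split.
- intros [Hmean Hode]; apply shifted_cos_families.
  exact (ode_solution_shifted_cos a a1 a2 Ha1 Ha2 Hmean Hode).
- intros Hfam; apply shifted_cos_families in Hfam as [s [n [Hn Ha]]].
  apply (shifted_cos_solves a a1 s (INR n / 2)); auto.
  + exact (continuous_on_Icc_of_deriv_on_Icc _ _ _ _ Ha2).
  + apply Rdiv_lt_0_compat; [apply lt_0_INR; lia | lra].
  + replace (2 * (INR n / 2) * PI) with (INR n * PI) by field; apply sin_INR_mult_PI.
Qed.
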